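(* Let $X$ be a complete hyperbolic surface of finite area and $p$ a cusp. There is a constant $C>0$ such that for every integer $n\ge1$ and every $T>0$, $$A_n^p(T)\le \frac{Ce^T}{n^2}.$$
   Context: $N_p(1)$ is the embedded horoball neighborhood of $p$ whose boundary horocycle has length $1$. Lifting to the upper half-plane with $p$ at $\infty$, $N_p(1)$ lifts to $\{\mathrm{Im}\,z\ge h\}$ and the stabilizer of $\infty$ is generated by $z\mapsto z+1$ (suitably normalized). An $n$-excursion in $N_p(1)$ is a geodesic arc contained in $N_p(1)$ with endpoints on $\partial N_p(1)$ whose lifted endpoints $z_1,z_2$ satisfy $n\le|\mathrm{Re}\,z_1-\mathrm{Re}\,z_2|<n+1$. $A_n^p(T)$ is the total number of $n$-excursions in $N_p(1)$ occurring as subarcs of closed geodesics of length $\le T$ (i.e. the number of pairs $(\gamma,\eta)$ with $\gamma$ a closed geodesic of length $\le T$ and $\eta$ an $n$-excursion of $\gamma$ in $N_p(1)$). *)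

(* A complete finite-area hyperbolic surface X is modelled (as usual) as H/G
   for a torsion-free discrete subgroup G of SL(2,R) of finite covolume, with
   the cusp p normalized at infinity so that its stabilizer is generated by
   z |-> z + 1 (up to -I).  N_p(1) lifts to B = {Im z >= 1}. *)
From HB Require Import structures.
From mathcomp Require Import all_boot all_order all_algebra.
From mathcomp Require Import all_classical all_reals all_analysis.
Import Order.TTheory GRing.Theory Num.Theory.
Import numFieldNormedType.Exports.
Local Open Scope classical_set_scope.
Local Open Scope ring_scope.

Set Implicit Arguments.
Unset Strict Implicit.
Unset Printing Implicit Defensive.

(* 2x2 real matrices [[a, b], [c, d]] *)
Record mat2 (R : Type) := M2 { ma : R; mb : R; mc : R; md : R }.

Section HypDefs.
Variable R : realType.

Definition mmul (g h : mat2 R) : mat2 R :=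
  M2 (ma g * ma h + mb g * mc h) (ma g * mb h + mb g * md h)
     (mc g * ma h + md g * mc h) (mc g * mb h + md g * md h).
Definition mid : mat2 R := M2 1 0 0 1.
Definition mdet (g : mat2 R) : R := ma g * md g - mb g * mc g.
Definition minv (g : mat2 R) : mat2 R := M2 (md g) (- mb g) (- mc g) (ma g).
Definition mtr (g : mat2 R) : R := ma g + md g.

(* Upper half-plane: points z = x + i y encoded as (x, y) with y > 0. *)
Definition uhp : set (R * R) := [set z | 0 < z.2].

(* Moebius action z |-> (a z + b) / (c z + d) of a determinant-1 matrix. *)
Definition mob (g : mat2 R) (z : R * R) : R * R :=
  let den := (mc g * z.1 + md g) ^+ 2 + (mc g * z.2) ^+ 2 in
  (((ma g * z.1 + mb g) * (mc g * z.1 + md g) + ma g * mc g * z.2 ^+ 2) / den,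
   z.2 / den).

Definition sl2_subgroup (G : set (mat2 R)) : Prop :=
  [/\ G mid, (forall g h, G g -> G h -> G (mmul g h)),
      (forall g, G g -> G (minv g)) & (forall g, G g -> mdet g = 1)].

Definition discrete_group (G : set (mat2 R)) : Prop :=
  forall M : R, finite_set [set g | G g /\
     [/\ `|ma g| <= M, `|mb g| <= M, `|mc g| <= M & `|md g| <= M]].

(* torsion-free (as a group of isometries): no elliptic elements *)
Definition no_elliptic (G : set (mat2 R)) : Prop :=
  forall g, G g -> 2 <= `|mtr g|.

Definition finite_area (G : set (mat2 R)) : Prop :=
  exists F : set (R * R),
    [/\ measurable F, F `<=` uhp,
        (forall z, uhp z -> exists g w, [/\ G g, F w & mob g w = z])
      & (\int[((@lebesgue_measure R) \x (@lebesgue_measure R))%E]_(z in F)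
            ((z.2 ^- 2)%:E) < +oo)%E].

Definition cusp_at_infinity (G : set (mat2 R)) : Prop :=
  G (M2 1 1 0 1) /\
  forall g, G g -> mc g = 0 ->
    exists k : int, g = M2 1 k%:~R 0 1 \/ g = M2 (-1) k%:~R 0 (-1).

Definition hyperbolic (g : mat2 R) : Prop := 2 < `|mtr g|.

(* translation length 2 arccosh(|tr g|/2) of a hyperbolic element *)
Definition translen (g : mat2 R) : R :=
  2 * ln ((`|mtr g| + Num.sqrt (mtr g ^+ 2 - 4)) / 2).

Definition geod (c r : R) : set (R * R) :=
  [set z | 0 < z.2 /\ (z.1 - c) ^+ 2 + z.2 ^+ 2 = r ^+ 2].

(* a geodesic L of H is the lift of a closed geodesic iff it is the axis
   (invariant geodesic) of some hyperbolic element of G; the length of that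
   closed geodesic is the minimal translation length along L *)
Definition axis_of (G : set (mat2 R)) (L : set (R * R)) : set (mat2 R) :=
  [set g | [/\ G g, hyperbolic g & mob g @` L = L]].

Definition closed_geod_length (G : set (mat2 R)) (L : set (R * R)) : R :=
  inf (translen @` axis_of G L).

Definition horoball : set (R * R) := [set z | 1 <= z.2].

Definition n_excursion_lift (G : set (mat2 R)) (T : R) (n : nat)
    (cr : R * R) : Prop :=
  let L := geod cr.1 cr.2 in
  [/\ 0 < cr.2, axis_of G L !=set0, closed_geod_length G L <= T &
      exists z1 z2, [/\ L z1, L z2, z1.2 = 1, z2.2 = 1 &
        n%:R <= `|z1.1 - z2.1| < n.+1%:R]].

Definition same_excursion (G : set (mat2 R)) (cr1 cr2 : R * R) : Prop :=
  exists g, G g /\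
    mob g @` (geod cr1.1 cr1.2 `&` horoball) = geod cr2.1 cr2.2 `&` horoball.

End HypDefs.

From HB Require Import structures.
From mathcomp Require Import all_boot all_order all_algebra.
From mathcomp Require Import all_classical all_reals all_analysis.
From mathcomp Require Import ring lra zify.
Import Order.TTheory GRing.Theory Num.Theory.
Local Open Scope classical_set_scope.
Local Open Scope ring_scope.

Set Implicit Arguments.
Unset Strict Implicit.
Unset Printing Implicit Defensive.

(* An n-excursion of a closed geodesic of length <= T is cut out of the
   horoball Im z >= 1 by the axis of a hyperbolic g in G, a semicircle of
   centre x0 and radius r with 4 r^2 in [n^2 + 4, (n+1)^2 + 4), and
   tr(g)^2 <= 4 e^(T+1).  Writing c for the lower-left entry of g, the axis
   equation gives tr(g)^2 - 4 = 4 c^2 r^2, hence c^2 <= X := 4 e^(T+1) / n^2.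
   By (a weak form of) Shimizu's lemma, two such g whose values g(oo) = a/c
   agree modulo 1 up to 1/(8X) lie in a common double coset <z+1> g Stab(oo).
   If moreover their ratios tr/c = g(oo) - g^-1(oo) are within 1 of each
   other, which is forced by their sign and by the half of the radius range r
   lies in, the two axes are integer translates: the excursions coincide.
   Distinct excursions thus get distinct keys among 4 (8X + 1) <= 96 X. *)

Section Translations.
Variable R : realType.
Implicit Types g h u : mat2 R.

Lemma mmulA g h u : mmul g (mmul h u) = mmul (mmul g h) u.
Proof. by rewrite /mmul /=; congr M2; ring. Qed.

Lemma mmul1l g : mmul (mid R) g = g.
Proof. by case: g => a b c d; rewrite /mmul /mid /=; congr M2; ring. Qed.

Lemma mmulV g : mdet g = 1 -> mmul g (minv g) = mid R.
Proof. by rewrite /mdet /mmul /minv /mid /= => dt; congr M2; rewrite -?dt; ring. Qed.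

Definition transl (m : int) : mat2 R := M2 1 m%:~R 0 1.

Lemma translD m k : mmul (transl m) (transl k) = transl (m + k).
Proof. by rewrite /transl /mmul /= intrD; congr M2; ring. Qed.

Lemma minv_transl m : minv (transl m) = transl (- m).
Proof. by rewrite /transl /minv /= intrN; congr M2; ring. Qed.

Lemma transl_in (G : set (mat2 R)) :
  sl2_subgroup G -> G (M2 1 1 0 1) -> forall m, G (transl m).
Proof.
case=> G1 GM GV _ GT.
have Gnat (n : nat) : G (transl n).
  elim: n => [|n IHn]; first by have -> : transl 0 = mid R by [].
  by rewrite -addn1 PoszD -translD; exact: GM.
by case=> n; [exact: Gnat | rewrite NegzE -minv_transl; exact: GV].
Qed.

Lemma mob_transl m z : mob (transl m) z = (z.1 + m%:~R, z.2).
Proof.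
rewrite /mob /transl /=.
have -> : (0 * z.1 + 1) ^+ 2 + (0 * z.2) ^+ 2 = 1 :> R by ring.
by rewrite !divr1; congr pair; ring.
Qed.

Lemma image_transl_arc m c r :
  mob (transl m) @` (geod c r `&` @horoball R) = geod (c + m%:~R) r `&` @horoball R.
Proof.
apply/seteqP; split.
  move=> _ [z [[z2 zE] zh] <-]; rewrite mob_transl; split; [split|] => //=.
  by rewrite -zE; congr (_ + _); congr (_ ^+ 2); ring.
move=> w [[w2 wE] wh]; exists (w.1 - m%:~R, w.2).
  split; [split|] => //=; rewrite -wE; congr (_ + _); congr (_ ^+ 2); ring.
by rewrite mob_transl /=; case: w {w2 wE wh} => x y /=; congr pair; ring.
Qed.

End Translations.
Arguments transl {R}.

Section Shimizu.
Variable R : realType.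
Implicit Types (G : set (mat2 R)) (g h : mat2 R).

Definition bounded_by (M : R) g :=
  [/\ `|ma g| <= M, `|mb g| <= M, `|mc g| <= M & `|md g| <= M].

Definition conj_transl g := mmul (mmul g (transl 1)) (minv g).

Lemma conj_translE g : conj_transl g =
  M2 (mdet g - ma g * mc g) (ma g ^+ 2) (- mc g ^+ 2) (mdet g + ma g * mc g).
Proof. by rewrite /conj_transl /mmul /minv /mdet /=; congr M2; ring. Qed.

Lemma conj_transl_descent g : mdet g = 1 -> `|ma g| <= 2 -> 0 < `|mc g| < 1/4 ->
  [/\ bounded_by 4 (conj_transl g), `|ma (conj_transl g)| <= 2
    & 0 < `|mc (conj_transl g)| < `|mc g|].
Proof.
rewrite conj_translE /bounded_by /= normrN normrX => -> ha /andP[c0 c4].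
have ac : `|ma g * mc g| <= 1/2.
  rewrite normrM; apply: (@le_trans _ _ (2 * (1/4))); last lra.
  by apply: ler_pM => //; exact: ltW.
have a2 : `|ma g| ^+ 2 <= 4 by have := normr_ge0 (ma g); nra.
have c2 : `|mc g| ^+ 2 < `|mc g| by nra.
have c1 : mc g ^+ 2 <= 1 by rewrite -real_normK ?num_real; nra.
move: ha ac; rewrite !ler_norml => /andP[? ?] /andP[? ?].
rewrite normrX; split; [split|..]; try (apply/andP; split); nra.
Qed.

Lemma discrete_no_descent G (s : nat -> mat2 R) (M : R) :
  discrete_group G -> (forall k, G (s k)) -> (forall k, bounded_by M (s k)) ->
  ~ (forall k, `|mc (s k.+1)| < `|mc (s k)|).
Proof.
move=> dG Gs Ms desc.
have lt_mc : {homo (fun k => `|mc (s k)|) : i j / (i < j)%N >-> j < i}.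
  apply: (@homo_ltn _ _ (fun x y => y < x)) => // y x z yx zy.
  exact: lt_trans zy yx.
have s_inj : {in s @^-1` [set g | G g /\ bounded_by M g] &, injective s}.
  move=> i j _ _ sij; case: (ltngtP i j) => // /lt_mc; by rewrite sij ltxx.
have := finite_preimage s_inj (dG M).
have -> : s @^-1` [set g | G g /\ bounded_by M g] = setT.
  by apply/seteqP; split => // k _; split.
exact: infinite_nat.
Qed.

(* Shimizu's lemma gives |c| >= 1; the weaker 1/4 suffices here.  Conjugating
   z |-> z + 1 by an element with |c| < 1/4 produces lower-left entry -c^2, so
   iteration yields infinitely many elements of bounded size. *)
Lemma shimizu G : sl2_subgroup G -> discrete_group G -> G (M2 1 1 0 1) ->
  forall h, G h -> mc h != 0 -> 1/4 <= `|mc h|.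
Proof.
move=> sG dG GT h Gh ch0; rewrite leNgt; apply/negP => ch4.
have [_ GM GV Gdet] := sG.
pose h0 := mmul (transl (- Num.floor (ma h / mc h))) h.
have Gh0 : G h0 by apply: (GM) => //; exact: transl_in.
have c0E : mc h0 = mc h by rewrite /h0 /transl /mmul /=; ring.
have a0_le : `|ma h0| <= 2.
  have a0E : ma h0 = mc h * (ma h / mc h - (Num.floor (ma h / mc h))%:~R).
    by rewrite /h0 /transl /mmul /= intrN; field.
  have /andP[f0 f1] := floor_itv (ma h / mc h); rewrite intrD in f1.
  rewrite a0E normrM; apply: (@le_trans _ _ (`|mc h| * 1)); last lra.
  by apply: ler_wpM2l => //; rewrite ler_norml; apply/andP; split; lra.
pose s k := iter k conj_transl h0.
have inv k : [/\ G (s k), `|ma (s k)| <= 2 & 0 < `|mc (s k)| < 1/4].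
  elim: k => [|k [Gk ak ck]].
    by have -> : s 0%N = h0 by []; rewrite c0E normr_gt0 ch0.
  have [_ ak' /andP[ck0 ck']] := conj_transl_descent (Gdet _ Gk) ak ck.
  split=> //; first by apply: (GM); [apply: (GM) | apply: (GV)].
  by rewrite ck0; apply: lt_le_trans ck' _; case/andP: ck => _ /ltW.
apply: (@discrete_no_descent G (fun k => s k.+1) 4 dG) => k.
- by case: (inv k.+1).
- by have [Gk ak ck] := inv k; case: (conj_transl_descent (Gdet _ Gk) ak ck).
- have [Gk ak ck] := inv k.+1.
  by case: (conj_transl_descent (Gdet _ Gk) ak ck) => _ _ /andP[].
Qed.

End Shimizu.

Section Axis.
Variable R : realType.
Implicit Types (g : mat2 R) (c r x y Y : R).

Definition circle_pullback g c r x Y :=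
  (ma g * x + mb g) ^+ 2 + ma g ^+ 2 * Y
  - 2 * c * ((ma g * x + mb g) * (mc g * x + md g) + ma g * mc g * Y)
  + (c ^+ 2 - r ^+ 2) * ((mc g * x + md g) ^+ 2 + mc g ^+ 2 * Y).

Lemma circle_pullback_mob g c r x y : mdet g = 1 -> 0 < y ->
  geod c r (mob g (x, y)) -> circle_pullback g c r x (y ^+ 2) = 0.
Proof.
rewrite /mdet /geod /mob /circle_pullback /=.
set a := ma g; set b := mb g; set cc := mc g; set d := md g => dt y0 [_].
set den := (cc * x + d) ^+ 2 + (cc * y) ^+ 2.
have den0 : den != 0.
  rewrite /den; case: (eqVneq cc 0) => [c0|c0].
    rewrite c0 !mul0r add0r expr0n /= addr0 sqrf_eq0; apply/eqP => d0.
    by move: dt; rewrite c0 d0 mulr0 mulr0 subr0 => /eqP; rewrite eq_sym oner_eq0.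
  rewrite paddr_eq0 ?sqr_ge0 // negb_and orbC sqrf_eq0 mulf_neq0 //.
  by rewrite gt_eqF.
move=> on_circle.
have cleared : den ^+ 2 * ((((a * x + b) * (cc * x + d) + a * cc * y ^+ 2) / den - c) ^+ 2
            + (y / den) ^+ 2 - r ^+ 2) =
   den * ((a * x + b) ^+ 2 + a ^+ 2 * y ^+ 2
  - 2 * c * ((a * x + b) * (cc * x + d) + a * cc * y ^+ 2)
  + (c ^+ 2 - r ^+ 2) * ((cc * x + d) ^+ 2 + cc ^+ 2 * y ^+ 2))
   - y ^+ 2 * ((a * d - b * cc) ^+ 2 - 1).
  by rewrite /den; field.
move: cleared; rewrite on_circle subrr mulr0 dt expr1n subrr mulr0 subr0 => /esym/eqP.
by rewrite mulf_eq0 (negbTE den0) => /eqP.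
Qed.

Definition maps_boundary g x y := ma g * x + mb g - y * (mc g * x + md g).

(* On the circle, Y = r^2 - (x - c)^2 and the pullback becomes affine in x: it
   vanishes at two interior points, hence also at the endpoints c - r, c + r. *)
Lemma geod_invariant_endpoints g c r : mdet g = 1 -> 0 < r ->
  (forall z, geod c r z -> geod c r (mob g z)) ->
  maps_boundary g (c - r) (c - r) * maps_boundary g (c - r) (c + r) = 0 /\
  maps_boundary g (c + r) (c - r) * maps_boundary g (c + r) (c + r) = 0.
Proof.
move=> dt r0 inv.
have top : geod c r (c, r) by split => //=; rewrite subrr; ring.
have P0 := circle_pullback_mob dt r0 (inv _ top).
pose s := Num.sqrt 3 / 2 * r.
have s2 : s ^+ 2 = 3 / 4 * r ^+ 2.
  by rewrite /s !exprMn sqr_sqrtr; [field | lra].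
have s0 : 0 < s by rewrite /s mulr_gt0 // divr_gt0 // sqrtr_gt0; lra.
have side : geod c r (c + r / 2, s) by split => //=; rewrite s2; field.
have P1 := circle_pullback_mob dt s0 (inv _ side); rewrite s2 in P1.
rewrite /maps_boundary; split.
- transitivity (3 * circle_pullback g c r c (r ^+ 2)
    - 2 * circle_pullback g c r (c + r / 2) (3 / 4 * r ^+ 2)).
    by rewrite /circle_pullback; field.
  by rewrite P0 P1; ring.
- transitivity (- circle_pullback g c r c (r ^+ 2)
    + 2 * circle_pullback g c r (c + r / 2) (3 / 4 * r ^+ 2)).
    by rewrite /circle_pullback; field.
  by rewrite P0 P1; ring.
Qed.

Lemma axis_entries g c r : mdet g = 1 -> 2 < `|mtr g| -> 0 < r ->
  (forall z, geod c r z -> geod c r (mob g z)) ->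
  [/\ mc g != 0, ma g - md g = 2 * c * mc g &
      mtr g ^+ 2 - 4 = 4 * mc g ^+ 2 * r ^+ 2].
Proof.
move=> dt tr2 r0 inv.
(* g permutes the endpoints c - r, c + r: a swap would force tr g = 0 and a
   collapse det g = 0, so both endpoints are fixed. *)
have [] := geod_invariant_endpoints dt r0 inv.
have t2 : 4 < mtr g ^+ 2 by rewrite -real_normK ?num_real //; nra.
move: dt t2; rewrite /maps_boundary /mdet /mtr.
set p := c - r; set q := c + r.
have pq : p - q != 0 by rewrite /p /q; apply/eqP; lra.
have cancel_pq u : u * (p - q) = 0 -> u = 0.
  by move/eqP; rewrite mulf_eq0 (negbTE pq) orbF => /eqP.
set a := ma g; set b := mb g; set cc := mc g; set d := md g => dt t2.
move=> /eqP; rewrite mulf_eq0 => /orP[] /eqP Fp /eqP; rewrite mulf_eq0 => /orP[] /eqP Fq.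
- have ea : a - p * cc = 0.
    by apply: cancel_pq; rewrite -[RHS](subrr 0) -{1}Fp -Fq; ring.
  by move: dt; rewrite (_ : b = p * d); nra.
- have ad : a - d - cc * (p + q) = 0.
    by apply: cancel_pq; rewrite -[RHS](subrr 0) -{1}Fp -Fq; ring.
  have {}ad : a - d = cc * (p + q) by rewrite -[LHS]subr0 -ad; ring.
  have eb : b = - cc * (p * q) by nra.
  have key : (a + d) ^+ 2 - 4 = 4 * cc ^+ 2 * r ^+ 2.
    transitivity ((a - d) ^+ 2 + 4 * (a * d - b * cc) + 4 * b * cc - 4); first by ring.
    by rewrite dt ad eb /p /q; ring.
  split => //; first by apply/eqP => c0; move: key t2; rewrite c0; nra.
  by rewrite ad /p /q; ring.
- have : (a + d) * (p - q) = 0 by rewrite -[RHS](subrr 0) -{1}Fp -Fq; ring.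
  by move/cancel_pq => tr0; move: t2; rewrite tr0; lra.
- have ea : a - q * cc = 0.
    by apply: cancel_pq; rewrite -[RHS](subrr 0) -{1}Fp -Fq; ring.
  by move: dt; rewrite (_ : b = q * d); nra.
Qed.

End Axis.

Section RealFacts.
Variable R : realType.
Implicit Types x y : R.

Definition fracpart x := x - (Num.floor x)%:~R.

Lemma fracpart_itv x : 0 <= fracpart x < 1.
Proof.
have := floor_itv x; rewrite intrD /fracpart => /andP[? ?].
by apply/andP; split; lra.
Qed.

Lemma truncn_eq_dist x y : 0 <= x -> 0 <= y -> Num.truncn x = Num.truncn y ->
  `|x - y| < 1.
Proof.
move=> x0 y0 exy; move: (truncn_itv x0) (truncn_itv y0).
rewrite exy -!natr1 => /andP[? ?] /andP[? ?].
by rewrite ltr_norml; apply/andP; split; lra.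
Qed.

Lemma intr_norm_lt1 (z : int) : `|z%:~R : R| < 1 -> z = 0.
Proof. by rewrite -intr_norm -[1]mulr1z ltr_int; lia. Qed.

Lemma dist_lt1_of_sqr x y (n : R) : 0 <= x -> 0 <= y -> 1 <= n ->
  n ^+ 2 < x ^+ 2 -> n ^+ 2 < y ^+ 2 -> `|x ^+ 2 - y ^+ 2| < n + 3/4 -> `|x - y| < 1.
Proof.
move=> x0 y0 n1 nx ny; rewrite !ltr_norml => /andP[lo hi].
have xn : n < x by nra.
have yn : n < y by nra.
apply/andP; split; nra.
Qed.

(* Halving the range of 4 r^2 makes the squares of the trace ratios [v] differ
   by less than n + 3/4, while |v| > n; this pins v down to within 1. *)
Lemma trace_ratio_close (n : nat) (w r1 r2 v1 v2 : R) : (1 <= n)%N -> 0 < w ->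
  v1 ^+ 2 = w + 4 * r1 ^+ 2 -> v2 ^+ 2 = w + 4 * r2 ^+ 2 ->
  n%:R ^+ 2 + 4 <= 4 * r1 ^+ 2 < n.+1%:R ^+ 2 + 4 ->
  n%:R ^+ 2 + 4 <= 4 * r2 ^+ 2 < n.+1%:R ^+ 2 + 4 ->
  (4 * r1 ^+ 2 < (n%:R + 1/2) ^+ 2 + 4) = (4 * r2 ^+ 2 < (n%:R + 1/2) ^+ 2 + 4) ->
  (0 <= v1) = (0 <= v2) -> `|v1 - v2| < 1.
Proof.
move=> n1 w0 e1 e2 /andP[a1 a2] /andP[b1 b2] same_half same_sign.
have nR : (1 : R) <= n%:R by rewrite ler1n.
have dr : `|v1 ^+ 2 - v2 ^+ 2| < n%:R + 3/4.
  rewrite e1 e2 (_ : w + _ - (w + _) = 4 * r1 ^+ 2 - 4 * r2 ^+ 2); last by ring.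
  have h2 : (n%:R + 1/2) ^+ 2 = n%:R ^+ 2 + n%:R + 1/4 :> R by field.
  have h1 : n.+1%:R ^+ 2 = n%:R ^+ 2 + 2 * n%:R + 1 :> R by rewrite -natr1; ring.
  move: same_half a2 b2; rewrite h1 h2 ltr_norml.
  by case: ltP => ?; case: ltP => ? // _ ? ?; apply/andP; split; lra.
have nv1 : n%:R ^+ 2 < v1 ^+ 2 by lra.
have nv2 : n%:R ^+ 2 < v2 ^+ 2 by lra.
have [v1_ge0|v1_lt0] := leP 0 v1.
  by apply: dist_lt1_of_sqr nR nv1 nv2 dr; rewrite // -same_sign.
have v2_lt0 : v2 < 0 by rewrite ltNge -same_sign -ltNge.
rewrite -normrN (_ : - (v1 - v2) = - v1 - - v2); last by ring.
apply: (@dist_lt1_of_sqr (- v1) (- v2) n%:R);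
  by rewrite ?sqrrN ?oppr_ge0 ?(ltW v1_lt0) ?(ltW v2_lt0).
Qed.

End RealFacts.

Section Excursions.
Variable R : realType.
Implicit Types (g : mat2 R) (c r x T : R).

Lemma excursion_radius c r (n : nat) (z1 z2 : R * R) : (1 <= n)%N ->
  geod c r z1 -> geod c r z2 -> z1.2 = 1 -> z2.2 = 1 ->
  n%:R <= `|z1.1 - z2.1| < n.+1%:R ->
  n%:R ^+ 2 + 4 <= 4 * r ^+ 2 < n.+1%:R ^+ 2 + 4.
Proof.
case: z1 z2 => [x1 y1] [x2 y2] n1 [_ e1] [_ e2] /= h1 h2 /andP[lo hi].
move: e1 e2; rewrite /= h1 h2 => e1 e2.
have ne : x1 - x2 != 0.
  by apply/eqP => e; move: lo; rewrite e normr0 lern0; lia.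
have centred : x1 + x2 - 2 * c = 0.
  have : (x1 - x2) * (x1 + x2 - 2 * c) = 0.
    by rewrite -[RHS](subrr (r ^+ 2)) -{1}e1 -e2; ring.
  by move/eqP; rewrite mulf_eq0 (negbTE ne) => /eqP.
have -> : 4 * r ^+ 2 = `|x1 - x2| ^+ 2 + 4.
  by rewrite real_normK ?num_real // -e1 (_ : x1 - c = (x1 - x2) / 2); [field | lra].
by rewrite lerD2r ltrD2r ler_sqr ?ltr_sqr ?nnegrE // lo hi.
Qed.

Lemma trace_sqr_lt g T : 2 < `|mtr g| -> translen g < T -> mtr g ^+ 2 <= 4 * expR T.
Proof.
rewrite /translen => t2 hT.
set u := (`|mtr g| + Num.sqrt (mtr g ^+ 2 - 4)) / 2 in hT.
have u_ge : `|mtr g| / 2 <= u by rewrite /u ler_pM2r // lerDl sqrtr_ge0.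
have u_lt : u < expR (T / 2) by rewrite -(lnK (x := u)) ?ltr_expR ?posrE; lra.
have -> : expR T = expR (T / 2) ^+ 2 by rewrite expr2 -expRD; congr expR; field.
rewrite -real_normK ?num_real //; have := normr_ge0 (mtr g); nra.
Qed.

Variable G : set (mat2 R).
Hypothesis sG : sl2_subgroup G.

Definition excursion_axis (n : nat) (X : R) g (cr : R * R) :=
  [/\ G g, mc g != 0, ma g - md g = 2 * cr.1 * mc g,
      mtr g ^+ 2 - 4 = 4 * mc g ^+ 2 * cr.2 ^+ 2 &
      [/\ 0 < cr.2, n%:R ^+ 2 + 4 <= 4 * cr.2 ^+ 2 < n.+1%:R ^+ 2 + 4
        & mc g ^+ 2 <= X]].

Lemma excursion_lift_axis T (n : nat) (cr : R * R) : (1 <= n)%N ->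
  n_excursion_lift G T n cr ->
  exists g, excursion_axis n (4 * expR (T + 1) / n%:R ^+ 2) g cr.
Proof.
move=> n1 [] r0 [g0 axis_g0] len_le [z1 [z2 [L1 L2 h1 h2 width]]].
have [_ [g [Gg hyp_g Lg] <-] len_lt] :
    exists2 y, (@translen R @` axis_of G (geod cr.1 cr.2)) y & y < T + 1.
  apply: inf_lt; first by exists (translen g0), g0.
  by move: len_le; rewrite /closed_geod_length; lra.
have inv z : geod cr.1 cr.2 z -> geod cr.1 cr.2 (mob g z).
  by move=> Lz; rewrite -Lg; exists z.
have [_ _ _ Gdet] := sG.
have [c0 ad tr] := axis_entries (Gdet _ Gg) hyp_g r0 inv.
have rad := excursion_radius n1 L1 L2 h1 h2 width.
exists g; split => //; split => //.
have n2 : 0 < n%:R ^+ 2 :> R by rewrite exprn_gt0 // ltr0n.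
have := trace_sqr_lt hyp_g len_lt; case/andP: rad => rad _.
rewrite ler_pdivlMr //; have := sqr_ge0 (mc g); nra.
Qed.

End Excursions.

Section Counting.
Variable R : realType.
Implicit Types g h : mat2 R.

Lemma mc_coset g1 g2 (l : int) : mc g1 != 0 -> mc g2 != 0 ->
  mc (mmul (minv g1) (mmul (transl l) g2)) =
  mc g1 * mc g2 * (ma g1 / mc g1 - ma g2 / mc g2 - l%:~R).
Proof. by move=> c1 c2; rewrite /mmul /minv /transl /=; field; rewrite ?c1 ?c2. Qed.

Lemma coset_ratios g1 g2 (l K : int) (e : R) :
  mdet g1 = 1 -> mc g1 != 0 -> e * e = 1 ->
  mmul (minv g1) (mmul (transl l) g2) = M2 e (e * K%:~R) 0 e ->
  [/\ mc g2 = e * mc g1, mtr g2 / mc g2 = mtr g1 / mc g1 + (K - l)%:~R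
    & (ma g2 - md g2) / mc g2 = (ma g1 - md g1) / mc g1 - (K + l)%:~R].
Proof.
move=> dt c1 ee hE.
have e0 : e != 0.
  by apply/eqP => e0; move: ee; rewrite e0 mul0r => /esym/eqP; rewrite oner_eq0.
have -> : g2 = mmul (transl (- l)) (mmul g1 (M2 e (e * K%:~R) 0 e)).
  rewrite -hE [mmul g1 _]mmulA mmulV // mmul1l mmulA translD addNr.
  by rewrite (_ : transl 0 = mid R) // mmul1l.
rewrite /mmul /mtr /transl /= !intrD !intrN.
by split; [ring | field | field]; rewrite ?e0 ?c1 ?mulf_neq0.
Qed.

Lemma trace_ratio_sqr g r : mc g != 0 -> mtr g ^+ 2 - 4 = 4 * mc g ^+ 2 * r ^+ 2 ->
  (mtr g / mc g) ^+ 2 = 4 / mc g ^+ 2 + 4 * r ^+ 2.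
Proof.
move=> c0 tr; rewrite expr_div_n.
by rewrite (_ : mtr g ^+ 2 = 4 + 4 * mc g ^+ 2 * r ^+ 2); [field | lra].
Qed.

Variable G : set (mat2 R).
Hypotheses (sG : sl2_subgroup G) (dG : discrete_group G) (GT : G (M2 1 1 0 1)).
Hypothesis stab_infty : forall g, G g -> mc g = 0 ->
  exists k : int, g = M2 1 k%:~R 0 1 \/ g = M2 (-1) k%:~R 0 (-1).

Lemma stabilizer_infty h : G h -> mc h = 0 ->
  exists e (K : int), e * e = 1 /\ h = M2 e (e * K%:~R) 0 e.
Proof.
move=> Gh /(stab_infty Gh) [K [->|->]].
- by exists 1, K; rewrite !mul1r.
- by exists (-1), (- K); rewrite mulrNN mulr1 intrN mulN1r opprK.
Qed.

Lemma close_fracparts_coset g1 g2 : G g1 -> G g2 -> mc g1 != 0 -> mc g2 != 0 ->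
  `|mc g1 * mc g2 * (fracpart (ma g1 / mc g1) - fracpart (ma g2 / mc g2))| < 1/4 ->
  exists (l K : int) e,
    e * e = 1 /\ mmul (minv g1) (mmul (transl l) g2) = M2 e (e * K%:~R) 0 e.
Proof.
move=> G1 G2 c1 c2 small.
have [_ GM GV _] := sG.
pose l := Num.floor (ma g1 / mc g1) - Num.floor (ma g2 / mc g2).
have Gh : G (mmul (minv g1) (mmul (transl l) g2)).
  by apply: (GM); [exact: GV | apply: (GM) => //; exact: transl_in].
have ch0 : mc (mmul (minv g1) (mmul (transl l) g2)) = 0.
  apply/eqP; apply: contraT => ch0; move: (shimizu sG dG GT Gh ch0).
  rewrite mc_coset //.
  have -> : ma g1 / mc g1 - ma g2 / mc g2 - l%:~R =
      fracpart (ma g1 / mc g1) - fracpart (ma g2 / mc g2).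
    by rewrite /fracpart /l intrB; ring.
  lra.
have [e [K [ee hE]]] := stabilizer_infty Gh ch0.
by exists l, K, e.
Qed.

(* [ma g / mc g] is g(oo) and [mtr g / mc g] is g(oo) - g^-1(oo). *)
Definition excursion_key (n : nat) (X : R) g (cr : R * R) :=
  (Num.truncn (8 * X * fracpart (ma g / mc g)), 0 <= mtr g / mc g,
   4 * cr.2 ^+ 2 < (n%:R + 1/2) ^+ 2 + 4).

Lemma excursion_key_inj (n : nat) (X : R) g1 g2 (cr1 cr2 : R * R) : (1 <= n)%N ->
  excursion_axis G n X g1 cr1 -> excursion_axis G n X g2 cr2 ->
  excursion_key n X g1 cr1 = excursion_key n X g2 cr2 -> same_excursion G cr1 cr2.
Proof.
move=> n1 [G1 c1 ad1 tr1 [r1 rad1 X1]] [G2 c2 ad2 tr2 [r2 rad2 X2]] [bucket sign half].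
have [/andP[f1 f1'] /andP[f2 f2']] :=
  (fracpart_itv (ma g1 / mc g1), fracpart_itv (ma g2 / mc g2)).
have X0 : 0 <= X by apply: le_trans X1; exact: sqr_ge0.
have near : `|8 * X * fracpart (ma g1 / mc g1) - 8 * X * fracpart (ma g2 / mc g2)| < 1.
  by apply: truncn_eq_dist; rewrite ?mulr_ge0.
have cc_le : `|mc g1 * mc g2| <= X.
  suff : `|mc g1 * mc g2| ^+ 2 <= X ^+ 2 by rewrite ler_sqr ?nnegrE.
  rewrite -normrX ger0_norm ?sqr_ge0 // exprMn [X ^+ 2]expr2.
  by apply: ler_pM; rewrite ?sqr_ge0.
have [l [K [e [ee hE]]]] : exists (l K : int) e,
    e * e = 1 /\ mmul (minv g1) (mmul (transl l) g2) = M2 e (e * K%:~R) 0 e.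
  apply: close_fracparts_coset => //; rewrite normrM.
  move: near; rewrite -mulrBr normrM (ger0_norm (_ : 0 <= 8 * X)) ?mulr_ge0 //.
  by have := normr_ge0 (fracpart (ma g1 / mc g1) - fracpart (ma g2 / mc g2)); nra.
have [_ _ _ Gdet] := sG.
have [c2E v2E x2E] := coset_ratios (Gdet _ G1) c1 ee hE.
have cc : mc g2 ^+ 2 = mc g1 ^+ 2 by rewrite c2E exprMn expr2 ee mul1r.
have v_close : `|mtr g1 / mc g1 - mtr g2 / mc g2| < 1.
  apply: (trace_ratio_close n1 _ (trace_ratio_sqr c1 tr1) _ rad1 rad2 half sign).
    by rewrite divr_gt0 // exprn_even_gt0.
  by rewrite (trace_ratio_sqr c2 tr2) cc.
have Kl : K = l.
  have : `|(K - l)%:~R : R| < 1.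
    rewrite (_ : (K - l)%:~R = - (mtr g1 / mc g1 - mtr g2 / mc g2)) ?normrN //.
    by rewrite v2E; ring.
  by move/intr_norm_lt1/eqP; rewrite subr_eq0 => /eqP.
have rr : cr2.2 = cr1.2.
  have := trace_ratio_sqr c2 tr2; rewrite v2E Kl subrr addr0 (trace_ratio_sqr c1 tr1) cc.
  move/addrI => r_sqr; apply/eqP; rewrite -(@eqrXn2 _ 2) ?ltW //; apply/eqP; lra.
have -> : cr2 = (cr1.1 + (- l)%:~R, cr1.2).
  rewrite [cr2]surjective_pairing rr; congr pair.
  by move: x2E; rewrite Kl ad1 ad2 !mulfK // intrD intrN; lra.
by exists (transl (- l)); split; [exact: transl_in | rewrite image_transl_arc].
Qed.

Lemma excursion_count (n k : nat) (X : R) (g : 'I_k -> mat2 R) (f : 'I_k -> R * R) :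
  (1 <= n)%N -> 0 <= X ->
  (forall i, excursion_axis G n X (g i) (f i)) ->
  (forall i j, same_excursion G (f i) (f j) -> i = j) ->
  k%:R <= 96 * X.
Proof.
move=> n1 X0 axis_gf inj_f.
case: k g f axis_gf inj_f => [|k] g f axis_gf inj_f; first by rewrite mulr_ge0.
have X_ge : 1/16 <= X.
  have [G0 c0 _ _ [_ _ cX]] := axis_gf ord0.
  have := shimizu sG dG GT G0 c0; rewrite -(real_normK (num_real (mc _))) in cX.
  by have := normr_ge0 (mc (g ord0)); nra.
pose N := Num.truncn (8 * X).
pose key i := excursion_key n X (g i) (f i).
have key_lt i : ((key i).1.1 < N.+1)%N.
  have /andP[f0 f1] := fracpart_itv (ma (g i) / mc (g i)).
  rewrite ltnS; apply: le_truncn.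
  by rewrite -[leRHS]mulr1 ler_wpM2l ?mulr_ge0 // ltW.
pose F i := ((inord (key i).1.1 : 'I_N.+1), (key i).1.2, (key i).2).
have F_inj : injective F.
  move=> i j Fij; apply: inj_f; apply: (excursion_key_inj n1 (axis_gf i) (axis_gf j)).
  move: Fij (key_lt i) (key_lt j); rewrite /F /key.
  case: (excursion_key n X (g i) (f i)) => [[qi si] hi].
  case: (excursion_key n X (g j) (f j)) => [[qj sj] hj] /= [] /(congr1 val) qE -> -> ? ?.
  by move: qE; rewrite /= !inordK // => ->.
have := leq_card F F_inj; rewrite !card_prod !card_ord card_bool => kN.
have N_le : (N%:R : R) <= 8 * X by rewrite truncn_le; lra.
have : (k.+1%:R : R) <= (N.+1 * 2 * 2)%:R by rewrite ler_nat.
by rewrite !natrM -natr1; lra.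
Qed.

End Counting.

Theorem proposition4p5 (R : realType) (G : set (mat2 R)) :
  sl2_subgroup G -> discrete_group G -> no_elliptic G -> finite_area G ->
  cusp_at_infinity G ->
  exists C : R, 0 < C /\
    forall (n : nat) (T : R), (1 <= n)%N -> 0 < T ->
    forall (k : nat) (f : 'I_k -> R * R),
      (forall i, n_excursion_lift G T n (f i)) ->
      (forall i j, same_excursion G (f i) (f j) -> i = j) ->
      k%:R <= C * expR T / n%:R ^+ 2.
Proof.
move=> sG dG _ _ [GT stab_infty].
exists (384 * expR 1); split; first by rewrite mulr_gt0 ?expR_gt0.
move=> n T n1 _ k f lift_f inj_f.
have [g axis_g] := choice (fun i => excursion_lift_axis sG n1 (lift_f i)).
have X0 : 0 <= 4 * expR (T + 1) / n%:R ^+ 2 by rewrite !mulr_ge0 ?expR_ge0 ?invr_ge0.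
apply: le_trans (excursion_count sG dG GT stab_infty n1 X0 axis_g inj_f) _.
by rewrite [leRHS](_ : _ = 96 * (4 * expR (T + 1) / n%:R ^+ 2)) // expRD; ring.
Qed.
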